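(* There is an absolute constant $c>0$ such that for every $\delta'\in(0,1)$, with probability at least $1-4\delta'$ over the draw of $\mathcal D$, any SBEED output $(\hat V,\hat\pi)$ satisfies $$\|\hat V-\mathcal C^{\hat\pi}_\lambda\hat V\|_{2,\mu}\le c\left(\sqrt{\frac{\jmath}{n}}+\sqrt{\epsilon_{\mathcal V,\mathcal P}}+\sqrt[4]{\frac{\jmath}{n}\epsilon_{\mathcal V,\mathcal P}}+\sqrt{\epsilon_{\mathcal G,\mathcal V,\mathcal P}}+\sqrt[4]{\frac{\iota}{n}\epsilon_{\mathcal G,\mathcal V,\mathcal P}}+\sqrt{\frac{\iota}{n}}\right),$$ where $\iota=V_{\lambda,\max}^2\ln\frac{|\mathcal V||\mathcal P||\mathcal G|}{\delta'}$ and $\jmath=V_{\lambda,\max}^2\ln\frac{|\mathcal V||\mathcal P|}{\delta'}$.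
   Context: Finite MDP with state space $\mathcal S$, action space $\mathcal A$, discount $\gamma\in[0,1)$, kernel $P$, reward $R:\mathcal S\times\mathcal A\to[0,R_{\max}]$; $\lambda>0$. $(\mathbb PV)(s,a)=\sum_{s'}P(s'\mid s,a)V(s')$; $(\mathcal C^\pi_\lambda V)(s,a)=R(s,a)+\gamma(\mathbb PV)(s,a)-\lambda\ln\pi(a\mid s)$. $\mu\in\Delta(\mathcal S\times\mathcal A)$, $\|f\|^2_{2,\mu}=\mathbb E_{\mu}[f(s,a)^2]$ (for $V$ depending only on $s$, $V-\mathcal C^\pi_\lambda V$ is $(s,a)\mapsto V(s)-(\mathcal C^\pi_\lambda V)(s,a)$). $V_{\lambda,\max}=(R_{\max}+\lambda\ln|\mathcal A|)/(1-\gamma)$. Finite classes $\mathcal V\subset[0,V_{\lambda,\max}]^{\mathcal S}$, $\mathcal P\subset\{\pi:\|\ln\pi\|_\infty\le V_{\lambda,\max}/\lambda\}$, $\mathcal G\subset[0,2V_{\lambda,\max}]^{\mathcal S\times\mathcal A}$. Dataset $\mathcal D=\{(s_i,a_i,r_i,s_i')\}_{i=1}^n$ with $(s_i,a_i)$ i.i.d. from $\mu$, $r_i=R(s_i,a_i)$, $s_i'\sim P(\cdot\mid s_i,a_i)$ independently. $\mathscr L_{\mathcal D}(V;V,\pi)=\frac1n\sum_i\big(V(s_i)-r_i-\gamma V(s_i')+\lambda\ln\pi(a_i\mid s_i)\big)^2$, $\mathscr R_{\mathcal D}(g;V,\pi)=\frac1n\sum_i\big(g(s_i,a_i)-r_i-\gamma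 V(s_i')+\lambda\ln\pi(a_i\mid s_i)\big)^2$. SBEED output: $(\hat V,\hat\pi)\in\arg\min_{V\in\mathcal V,\pi\in\mathcal P}\max_{g\in\mathcal G}\big[\mathscr L_{\mathcal D}(V;V,\pi)-\mathscr R_{\mathcal D}(g;V,\pi)\big]$. $\epsilon_{\mathcal V,\mathcal P}=\min_{V\in\mathcal V,\pi\in\mathcal P}\|V-\mathcal C^\pi_\lambda V\|^2_{2,\mu}$, $\epsilon_{\mathcal G,\mathcal V,\mathcal P}=\max_{V\in\mathcal V,\pi\in\mathcal P}\min_{g\in\mathcal G}\|g-\mathcal C^\pi_\lambda V\|^2_{2,\mu}$. *)

From mathcomp Require Import all_boot all_order all_algebra.
From mathcomp Require Import all_classical all_reals all_analysis.
Set Implicit Arguments. Unset Strict Implicit. Unset Printing Implicit Defensive.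
Import Order.TTheory GRing.Theory Num.Theory.
Local Open Scope ring_scope.

Section Defs.
Variables (R : realType) (S A : finType).

Definition Vlmax (Rmax lam gam : R) : R :=
  (Rmax + lam * ln (#|A|%:R)) / (1 - gam).

(* (P V)(s,a) = sum_{s'} P(s'|s,a) V(s');  P s a s' = P(s' | s, a) *)
Definition PV (P : S -> A -> S -> R) (V : S -> R) (s : S) (a : A) : R :=
  \sum_(s' : S) P s a s' * V s'.

(* (C^pi_lambda V)(s,a) = R(s,a) + gamma (P V)(s,a) - lambda ln pi(a|s);
   pi s a = pi(a | s) *)
Definition Cop (Rw : S -> A -> R) (P : S -> A -> S -> R) (gam lam : R)
  (pi : S -> A -> R) (V : S -> R) (s : S) (a : A) : R :=
  Rw s a + gam * PV P V s a - lam * ln (pi s a).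

Definition norm2mu (mu : S -> A -> R) (f : S -> A -> R) : R :=
  Num.sqrt (\sum_(s : S) \sum_(a : A) mu s a * (f s a) ^+ 2).

Definition is_distr_SA (mu : S -> A -> R) : Prop :=
  (forall s a, 0 <= mu s a) /\ \sum_(s : S) \sum_(a : A) mu s a = 1.

Definition is_kernel (P : S -> A -> S -> R) : Prop :=
  forall s a, (forall s', 0 <= P s a s') /\ \sum_(s' : S) P s a s' = 1.

Definition is_policy (pi : S -> A -> R) : Prop :=
  forall s, (forall a, 0 <= pi s a) /\ \sum_(a : A) pi s a = 1.

(* dataset: i-th sample (s_i, a_i, s_i'); reward r_i = R(s_i,a_i) *)
Definition dataset (n : nat) := {ffun 'I_n -> (S * A * S)%type}.

Definition LD n (D : dataset n) (Rw : S -> A -> R) (gam lam : R)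
  (V : S -> R) (pi : S -> A -> R) : R :=
  n%:R^-1 * \sum_(i < n)
    (V (D i).1.1 - Rw (D i).1.1 (D i).1.2 - gam * V (D i).2
       + lam * ln (pi (D i).1.1 (D i).1.2)) ^+ 2.

Definition RD n (D : dataset n) (Rw : S -> A -> R) (gam lam : R)
  (g : S -> A -> R) (V : S -> R) (pi : S -> A -> R) : R :=
  n%:R^-1 * \sum_(i < n)
    (g (D i).1.1 (D i).1.2 - Rw (D i).1.1 (D i).1.2 - gam * V (D i).2
       + lam * ln (pi (D i).1.1 (D i).1.2)) ^+ 2.

Definition sbeed_obj n (D : dataset n) Rw gam lam (IG : finType)
  (fG : IG -> S -> A -> R) (V : S -> R) (pi : S -> A -> R) : \bar R :=
  \big[Order.max/-oo%E]_(j : IG) (LD D Rw gam lam V pi - RD D Rw gam lam (fG j) V pi)%:E.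

Definition is_sbeed_output n (D : dataset n) Rw gam lam
  (IV IP IG : finType) (fV : IV -> S -> R) (fP : IP -> S -> A -> R)
  (fG : IG -> S -> A -> R) (iv : IV) (ip : IP) : Prop :=
  forall (iv' : IV) (ip' : IP),
    (sbeed_obj D Rw gam lam fG (fV iv) (fP ip)
       <= sbeed_obj D Rw gam lam fG (fV iv') (fP ip'))%E.

Definition eps_VP (mu : S -> A -> R) Rw P gam lam (IV IP : finType)
  (fV : IV -> S -> R) (fP : IP -> S -> A -> R) : R :=
  fine (\big[Order.min/+oo%E]_(iv : IV) \big[Order.min/+oo%E]_(ip : IP)
     ((norm2mu mu (fun s a => fV iv s - Cop Rw P gam lam (fP ip) (fV iv) s a)) ^+ 2)%:E).

Definition eps_GVP (mu : S -> A -> R) Rw P gam lam (IV IP IG : finType)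
  (fV : IV -> S -> R) (fP : IP -> S -> A -> R) (fG : IG -> S -> A -> R) : R :=
  fine (\big[Order.max/-oo%E]_(iv : IV) \big[Order.max/-oo%E]_(ip : IP)
     \big[Order.min/+oo%E]_(j : IG)
     ((norm2mu mu (fun s a => fG j s a - Cop Rw P gam lam (fP ip) (fV iv) s a)) ^+ 2)%:E).

Definition data_weight n (mu : S -> A -> R) (P : S -> A -> S -> R) (D : dataset n) : R :=
  \prod_(i < n) (mu (D i).1.1 (D i).1.2 * P (D i).1.1 (D i).1.2 (D i).2).

Definition data_prob n (mu : S -> A -> R) (P : S -> A -> S -> R)
  (E : dataset n -> Prop) : R :=
  \sum_(D : dataset n | `[< E D >]) data_weight mu P D.

End Defs.

From mathcomp Require Import all_boot all_order all_algebra.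
From mathcomp Require Import all_classical all_reals all_analysis.
From mathcomp Require Import ring lra.
Set Implicit Arguments. Unset Strict Implicit. Unset Printing Implicit Defensive.
Import Order.TTheory GRing.Theory Num.Theory.
Local Open Scope ring_scope.

(* For fixed (V, pi, g) the SBEED objective L_D(V;V,pi) - R_D(g;V,pi) is an   *)
(* empirical mean of the i.i.d. "excess losses" Z(s,a,s') =                   *)
(*   (V(s) - y)^2 - (g(s,a) - y)^2,   y = r + gam V(s') - lam ln pi(a|s),     *)
(* whose mean is ||V - C^pi V||^2 - ||g - C^pi V||^2 (the noise in s' cancels)*)
(* and whose variance is O(Vmax^2 ||V - g||^2).  The proof is organised as:   *)
(*  3. the SBEED setting: mean, variance and range of the excess loss, hence  *)
(*     a deviation radius O(p (||V - CV|| + ||g - CV||) + p^2), p^2 = Vmax^2  *)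
(*     ln(N/delta)/n, holding for one triple with probability 1 - 2 delta/N;  *)
(*  4. a union bound over the N = |V||P||G| triples, then a deterministic     *)
(*     argument comparing the SBEED output with the minimiser of eps_{V,P}    *)
(*     and with the best g in G, which yields the theorem with c = 30.        *)

Section IidSamples.
Variables (R : realType) (X : finType) (n : nat).

Lemma sum_prod_ffun (F : X -> R) :
  \sum_(D : {ffun 'I_n -> X}) \prod_i F (D i) = (\sum_x F x) ^+ n.
Proof.
by rewrite -(bigA_distr_bigA (fun (_ : 'I_n) x => F x)) /= prodr_const card_ord.
Qed.

Definition dprob (p : X -> R) (E : {ffun 'I_n -> X} -> Prop) : R :=
  \sum_(D : {ffun 'I_n -> X} | `[< E D >]) \prod_i p (D i).

Variable p : X -> R.
Hypothesis p_ge0 : forall x, 0 <= p x.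
Hypothesis p_sum1 : \sum_x p x = 1.

Lemma sample_weight_ge0 (D : {ffun 'I_n -> X}) : 0 <= \prod_i p (D i).
Proof. exact: prodr_ge0. Qed.

Lemma sample_weight_sum1 : \sum_(D : {ffun 'I_n -> X}) \prod_i p (D i) = 1.
Proof. by rewrite sum_prod_ffun p_sum1 expr1n. Qed.

Lemma dprob_mono (E E' : {ffun 'I_n -> X} -> Prop) :
  (forall D, E D -> E' D) -> dprob p E <= dprob p E'.
Proof.
move=> EE'; rewrite /dprob [X in _ <= X]big_mkcond [X in X <= _]big_mkcond /=.
apply: ler_sum => D _; case: (asboolP (E D)) => [ED|_].
  by rewrite (asboolT (EE' _ ED)).
by case: asboolP => _; [exact: sample_weight_ge0|].
Qed.

Lemma dprob_total (E : {ffun 'I_n -> X} -> Prop) :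
  (forall D, E D) -> dprob p E = 1.
Proof.
move=> allE; rewrite /dprob -[RHS]sample_weight_sum1.
by apply: eq_bigl => D; apply/asboolP.
Qed.

Lemma dprob_compl (E : {ffun 'I_n -> X} -> Prop) :
  dprob p E = 1 - dprob p (fun D => ~ E D).
Proof.
rewrite -sample_weight_sum1 (bigID (fun D => `[< E D >])) /= -addrA.
rewrite [X in _ + X](_ : _ = 0) ?addr0 //; apply/eqP; rewrite subr_eq0.
apply/eqP/eq_bigl => D.
by apply/negP/asboolP => nE ?; apply: nE; apply/asboolP.
Qed.

Lemma dprob_union (K : finType) (B : K -> {ffun 'I_n -> X} -> Prop) :
  dprob p (fun D => exists k, B k D) <= \sum_k dprob p (B k).
Proof.
rewrite /dprob big_mkcond /=.
under [in X in _ <= X]eq_bigr => k _ do rewrite big_mkcond /=.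
have weight_ge0 k D : 0 <= (if `[< B k D >] then \prod_i p (D i) else 0).
  by case: asboolP => _ //; exact: sample_weight_ge0.
rewrite exchange_big /=; apply: ler_sum => D _.
case: asboolP => [[k0 Bk0]|_]; last by apply: sumr_ge0 => k _.
by rewrite (bigD1 k0) //= (asboolT Bk0) lerDl; apply: sumr_ge0.
Qed.

Lemma dprob_or (E1 E2 : {ffun 'I_n -> X} -> Prop) :
  dprob p (fun D => E1 D \/ E2 D) <= dprob p E1 + dprob p E2.
Proof.
have := @dprob_union bool (fun b => if b then E1 else E2); rewrite big_bool /=.
apply: le_trans; apply: dprob_mono => D [?|?].
  by exists true.
by exists false.
Qed.

Lemma dprob_forall (K : finType) (E : K -> {ffun 'I_n -> X} -> Prop) :
  1 - \sum_k dprob p (fun D => ~ E k D) <= dprob p (fun D => forall k, E k D).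
Proof.
rewrite dprob_compl lerD2l lerN2; apply: le_trans (dprob_union (fun k D => ~ E k D)).
apply: dprob_mono => D notall; apply: contra_notP notall => none k.
by apply: contra_notP none => nEk; exists k.
Qed.

End IidSamples.
Arguments dprob {R X} n p E.
Arguments sum_prod_ffun {R X} n F.

Lemma expR_le_quad (R : realType) (x : R) :
  x <= 1/2 -> expR x <= 1 + x + 2 * x ^+ 2.
Proof.
move=> hx.
have emx := expR_ge1Dx (- x); rewrite expRN in emx.
have ex0 := expR_gt0 x.
have ex_le : (1 - x) * expR x <= 1.
  have : expR x * (expR x)^-1 = 1 by rewrite divff // lt0r_neq0.
  nra.
have : 1 <= (1 - x) * (1 + x + 2 * x ^+ 2) by nra.
nra.
Qed.

Section Bernstein.
Variables (R : realType) (X : finType) (n : nat).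
Variables (p Z : X -> R) (m s2 b : R).
Hypothesis p_ge0 : forall x, 0 <= p x.
Hypothesis p_sum1 : \sum_x p x = 1.
Hypothesis Z_mean : \sum_x p x * Z x = m.
Hypothesis Z_mom2 : \sum_x p x * Z x ^+ 2 <= s2.
Hypothesis Z_le : forall x, Z x <= b.

(* Markov's inequality applied to exp (th * sum Z). *)
Lemma chernoff_markov (th T : R) : 0 <= th ->
  dprob n p (fun D => T <= \sum_i Z (D i)) <=
  (\sum_x p x * expR (th * Z x)) ^+ n * expR (- (th * T)).
Proof.
move=> th0; rewrite -(sum_prod_ffun n (fun x => p x * expR (th * Z x))).
rewrite mulr_suml /dprob big_mkcond /=; apply: ler_sum => D _.
rewrite big_split /= -mulrA -expR_sum -expRD.
have w0 := sample_weight_ge0 p_ge0 D.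
case: asboolP => [HT|_]; last by apply: mulr_ge0 => //; exact: expR_ge0.
rewrite -[X in X <= _]mulr1; apply: ler_wpM2l => //.
apply: le_trans (expR_ge1Dx _); rewrite lerDl -mulr_sumr -mulrN -mulrDr.
by apply: mulr_ge0; rewrite ?subr_ge0.
Qed.

Lemma mgf_le (th : R) : 0 <= th -> th * b <= 1/2 ->
  \sum_x p x * expR (th * Z x) <= expR (th * m + 2 * th ^+ 2 * s2).
Proof.
move=> th0 thb; apply: le_trans (expR_ge1Dx _).
apply: (@le_trans _ _
  (\sum_x (p x + th * (p x * Z x) + 2 * th ^+ 2 * (p x * Z x ^+ 2)))).
  apply: ler_sum => x _.
  have thZ : th * Z x <= 1 / 2 by apply: le_trans thb; exact: ler_wpM2l.
  have := expR_le_quad thZ; have := p_ge0 x; nra.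
rewrite !big_split /= -!mulr_sumr p_sum1 Z_mean -addrA !lerD2l.
by apply: ler_wpM2l => //; nra.
Qed.

Hypothesis b_gt0 : 0 < b.

(* Upper tail: the sum exceeds n (m + 2 sqrt(2 s2 v) + 4 b v) with probability
   at most exp(-n v); the Chernoff parameter th = v / d optimises the bound. *)
Lemma bernstein_tail (v : R) : 0 < v ->
  dprob n p (fun D => n%:R * (m + 2 * Num.sqrt (2 * s2 * v) + 4 * b * v)
                      <= \sum_i Z (D i)) <= expR (- (n%:R * v)).
Proof.
move=> v0.
have s2_ge0 : 0 <= s2.
  apply: le_trans Z_mom2; apply: sumr_ge0 => x _.
  by apply: mulr_ge0 => //; exact: sqr_ge0.
set d := Num.sqrt (2 * s2 * v) + 2 * b * v.
have sq0 := sqrtr_ge0 (2 * s2 * v).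
have bv0 := mulr_gt0 b_gt0 v0.
have d_gt0 : 0 < d by rewrite /d; lra.
have d2 : 2 * s2 * v <= d ^+ 2.
  rewrite /d -[X in X <= _](@sqr_sqrtr _ (2 * s2 * v)); last first.
    by apply: mulr_ge0 => //; lra.
  by apply: lerXn2r; rewrite ?nnegrE; lra.
set th := v / d.
have th0 : 0 < th by rewrite /th divr_gt0.
have thd : th * d = v by rewrite /th mulfVK // lt0r_neq0.
have thb : th * b <= 1/2.
  have : 2 * b * v <= d by rewrite /d; lra.
  nra.
have var_term : 2 * th ^+ 2 * s2 <= v.
  rewrite -(ler_pM2r (exprn_gt0 2 d_gt0)).
  have -> : 2 * th ^+ 2 * s2 * d ^+ 2 = (th * d) ^+ 2 * (2 * s2) by ring.
  by rewrite thd; nra.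
set T := n%:R * (m + 2 * d).
have -> : n%:R * (m + 2 * Num.sqrt (2 * s2 * v) + 4 * b * v) = T.
  by rewrite /T /d; congr (_ * _); ring.
apply: le_trans (chernoff_markov T (ltW th0)) _.
have mgf_n : (\sum_x p x * expR (th * Z x)) ^+ n
             <= expR (n%:R * (th * m + 2 * th ^+ 2 * s2)).
  rewrite expRM_natl; apply: lerXn2r; rewrite ?nnegrE ?expR_ge0 //.
    by apply: sumr_ge0 => x _; apply: mulr_ge0 => //; exact: expR_ge0.
  exact: mgf_le (ltW th0) thb.
apply: le_trans (ler_wpM2r (expR_ge0 _) mgf_n) _.
rewrite -expRD ler_expR /T.
have : 0 <= n%:R :> R by [].
nra.
Qed.

End Bernstein.

Lemma bernstein_two_sided (R : realType) (X : finType) (n : nat)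
    (p Z : X -> R) (m s2 b v r : R) :
  (forall x, 0 <= p x) -> \sum_x p x = 1 ->
  \sum_x p x * Z x = m -> \sum_x p x * Z x ^+ 2 <= s2 ->
  (forall x, `|Z x| <= b) -> 0 < b -> 0 < v -> (0 < n)%N ->
  2 * Num.sqrt (2 * s2 * v) + 4 * b * v <= r ->
  dprob n p (fun D => ~ `|n%:R^-1 * \sum_i Z (D i) - m| <= r)
  <= 2 * expR (- (n%:R * v)).
Proof.
move=> p_ge0 p_sum1 Z_mean Z_mom2 Z_bnd b0 v0 n0 hr.
have n_gt0 : 0 < n%:R :> R by rewrite ltr0n.
have tail (W : X -> R) (mW : R) : \sum_x p x * W x = mW ->
    \sum_x p x * W x ^+ 2 <= s2 -> (forall x, W x <= b) ->
    dprob n p (fun D => r < n%:R^-1 * \sum_i W (D i) - mW)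
    <= expR (- (n%:R * v)).
  move=> W_mean W_mom2 W_le.
  apply: le_trans _ (bernstein_tail n p_ge0 p_sum1 W_mean W_mom2 W_le b0 v0).
  apply: (dprob_mono p_ge0) => D; rewrite ltrBrDl ltr_pdivlMl // -addrA => /ltW.
  by apply: le_trans; rewrite ler_wpM2l // lerD2l.
rewrite mulr2n mulrDl mul1r.
apply: le_trans (lerD (tail Z m Z_mean Z_mom2 _) (tail (fun x => - Z x) (- m) _ _ _)).
- apply: le_trans _ (dprob_or p_ge0 _ _).
  apply: (dprob_mono p_ge0) => D /negP; rewrite -ltNge ltr_normr sumrN mulrN.
  by move=> /orP [?|?]; [left|right; rewrite opprK addrC -opprB].
- by move=> x; have := Z_bnd x; rewrite ler_norml => /andP [].
- by under eq_bigr do rewrite mulrN; rewrite sumrN Z_mean.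
- by under eq_bigr do rewrite sqrrN.
- by move=> x; have := Z_bnd x; rewrite ler_norml lerNl => /andP [].
Qed.

Lemma sqrt_le_of (R : realType) (x y : R) : 0 <= y -> x <= y ^+ 2 ->
  Num.sqrt x <= y.
Proof.
by move=> y0 h; rewrite -(ger0_norm y0) -sqrtr_sqr ler_sqrt // sqr_ge0.
Qed.

(* The Bernstein radius for a variable of range 10 M^2 and second moment
   25 M^2 Q, with Q <= 2 a^2 + 2 b^2, is O(p (a + b) + p^2), p^2 = M^2 v. *)
Lemma bernstein_radius_le (R : realType) (M v Q a b : R) :
  0 <= v -> 0 <= a -> 0 <= b -> Q <= 2 * a ^+ 2 + 2 * b ^+ 2 ->
  2 * Num.sqrt (2 * (25 * M ^+ 2 * Q) * v) + 4 * (10 * M ^+ 2) * v <=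
  20 * Num.sqrt (M ^+ 2 * v) * (a + b) + 40 * Num.sqrt (M ^+ 2 * v) ^+ 2.
Proof.
move=> v0 a0 b0 hQ.
have Mv0 : 0 <= M ^+ 2 * v by rewrite mulr_ge0 ?sqr_ge0.
have p_sqr := sqr_sqrtr Mv0; have p0 := sqrtr_ge0 (M ^+ 2 * v).
move: (Num.sqrt (M ^+ 2 * v)) p_sqr p0 => p p_sqr p0.
have -> : 4 * (10 * M ^+ 2) * v = 40 * p ^+ 2 by rewrite p_sqr; ring.
suff : Num.sqrt (2 * (25 * M ^+ 2 * Q) * v) <= 10 * p * (a + b) by lra.
apply: sqrt_le_of; first by rewrite !mulr_ge0 ?addr_ge0.
have -> : 2 * (25 * M ^+ 2 * Q) * v = 50 * p ^+ 2 * Q by rewrite p_sqr; ring.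
have pab := mulr_ge0 (sqr_ge0 p) (mulr_ge0 a0 b0).
have := ler_wpM2l (sqr_ge0 p) hQ; nra.
Qed.

Lemma oracle_algebra (R : realType) (a b g p x : R) :
  0 <= a -> 0 <= b -> 0 <= g -> 0 <= p ->
  a ^+ 2 - b ^+ 2 - (20 * p * (a + b) + 40 * p ^+ 2) <= x ->
  x <= g ^+ 2 + 20 * p * g + 140 * p ^+ 2 -> a <= 30 * (b + g + p).
Proof.
move=> a0 b0 g0 p0 lo hi.
have a_sqr : a ^+ 2 <= b ^+ 2 + 20 * p * (a + b) + 180 * p ^+ 2
                      + g ^+ 2 + 20 * p * g by lra.
rewrite leNgt; apply/negP => big_a.
set s := b + g + p.
have s0 : 0 <= s by rewrite /s; lra.
have : b ^+ 2 + 20 * p * (a + b) + 180 * p ^+ 2 + g ^+ 2 + 20 * p * g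
       <= 20 * s * a + 201 * s ^+ 2 by rewrite /s; nra.
have : 30 * s * a < a ^+ 2 by nra.
nra.
Qed.

Lemma radius_absorb (R : realType) (g e p : R) :
  g ^+ 2 - e ^+ 2 + (20 * p * (g + e) + 40 * p ^+ 2)
  <= g ^+ 2 + 20 * p * g + 140 * p ^+ 2.
Proof. have := sqr_ge0 (e - 10 * p); nra. Qed.

Lemma bigmin_attained (R : realType) (I : finType) (i0 : I) (r : I -> R) :
  {i : I | \big[Order.min/+oo%E]_j ((r j)%:E : \bar R) = (r i)%:E}.
Proof.
have [i _ ->] := eq_bigmin i0 xpredT (fun j => (r j)%:E : \bar R) isT (fun j _ => leey _).
by exists i.
Qed.

Lemma bigmax_attained (R : realType) (I : finType) (i0 : I) (r : I -> R) :
  {i : I | \big[Order.max/-oo%E]_j ((r j)%:E : \bar R) = (r i)%:E}.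
Proof.
have [i _ ->] := eq_bigmax i0 xpredT (fun j => (r j)%:E : \bar R) isT (fun j _ => leNye _).
by exists i.
Qed.

Section SbeedSetting.
Variables (R : realType) (S A : finType) (gam lam : R).
Variables (P : S -> A -> S -> R) (Rw : S -> A -> R) (mu : S -> A -> R).
Hypothesis P_kernel : is_kernel P.
Hypothesis mu_distr : is_distr_SA mu.

Definition transition_weight (x : (S * A * S)%type) : R :=
  mu x.1.1 x.1.2 * P x.1.1 x.1.2 x.2.

Lemma data_probE n (E : dataset S A n -> Prop) :
  data_prob mu P E = dprob n transition_weight E.
Proof. by []. Qed.

Lemma sum_triple (F : (S * A * S)%type -> R) :
  \sum_x F x = \sum_s \sum_a \sum_s' F (s, a, s').
Proof.
by symmetry; rewrite pair_bigA /= pair_bigA /=; apply: eq_bigr => -[[s a] s'].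
Qed.

Lemma transition_weight_ge0 x : 0 <= transition_weight x.
Proof.
by apply: mulr_ge0; [case: mu_distr|case: (P_kernel x.1.1 x.1.2)].
Qed.

Lemma transition_weight_marginal (c : S -> A -> R) :
  \sum_x transition_weight x * c x.1.1 x.1.2 = \sum_s \sum_a mu s a * c s a.
Proof.
rewrite sum_triple; apply: eq_bigr => s _; apply: eq_bigr => a _ /=.
under eq_bigr do rewrite /transition_weight /= mulrAC.
by rewrite -mulr_sumr (proj2 (P_kernel s a)) mulr1.
Qed.

Lemma transition_weight_sum1 : \sum_x transition_weight x = 1.
Proof.
under eq_bigr do rewrite -[transition_weight _]mulr1.
rewrite (transition_weight_marginal (fun _ _ => 1)) -[RHS](proj2 mu_distr).
by apply: eq_bigr => s _; apply: eq_bigr => a _; rewrite mulr1.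
Qed.

Definition target (V : S -> R) (pi : S -> A -> R) (x : (S * A * S)%type) : R :=
  Rw x.1.1 x.1.2 + gam * V x.2 - lam * ln (pi x.1.1 x.1.2).

Definition excess_loss V pi (g : S -> A -> R) x : R :=
  (V x.1.1 - target V pi x) ^+ 2 - (g x.1.1 x.1.2 - target V pi x) ^+ 2.

Definition msq (f : S -> A -> R) : R := \sum_s \sum_a mu s a * f s a ^+ 2.

Lemma msq_ge0 f : 0 <= msq f.
Proof.
by apply: sumr_ge0 => s _; apply: sumr_ge0 => a _;
  rewrite mulr_ge0 ?sqr_ge0 //; case: mu_distr.
Qed.

Lemma norm2mu_sqr f : norm2mu mu f ^+ 2 = msq f.
Proof. exact/sqr_sqrtr/msq_ge0. Qed.

Definition bellman_err V pi : R :=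
  norm2mu mu (fun s a => V s - Cop Rw P gam lam pi V s a).

Definition fit_err (g : S -> A -> R) V pi : R :=
  norm2mu mu (fun s a => g s a - Cop Rw P gam lam pi V s a).

Lemma bellman_err_ge0 V pi : 0 <= bellman_err V pi.
Proof. exact: sqrtr_ge0. Qed.

Lemma fit_err_ge0 g V pi : 0 <= fit_err g V pi.
Proof. exact: sqrtr_ge0. Qed.

(* The noise of s' cancels in the excess loss: its mean is the difference of
   the squared Bellman error and the squared fitting error. *)
Lemma excess_loss_mean V pi g :
  \sum_x transition_weight x * excess_loss V pi g x =
  bellman_err V pi ^+ 2 - fit_err g V pi ^+ 2.
Proof.
rewrite !norm2mu_sqr /msq -sumrB sum_triple; apply: eq_bigr => s _.
rewrite -sumrB; apply: eq_bigr => a _ /=.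
have split_s' s' : transition_weight (s, a, s') * excess_loss V pi g (s, a, s') =
   mu s a * (P s a s' * (V s ^+ 2 - g s a ^+ 2
        - 2 * (V s - g s a) * (Rw s a - lam * ln (pi s a))))
   + mu s a * (-2 * (V s - g s a) * gam) * (P s a s' * V s').
  by rewrite /transition_weight /excess_loss /target /=; ring.
under eq_bigr do rewrite split_s'.
rewrite big_split /= -!mulr_sumr -mulr_suml (proj2 (P_kernel s a)) mul1r.
by rewrite /Cop /PV; ring.
Qed.

Definition sbeed_gap n (D : dataset S A n) V pi g : R :=
  LD D Rw gam lam V pi - RD D Rw gam lam g V pi.

Lemma sbeed_gapE n (D : dataset S A n) V pi g :
  sbeed_gap D V pi g = n%:R^-1 * \sum_i excess_loss V pi g (D i).
Proof.
rewrite /sbeed_gap /LD /RD -mulrBr -sumrB; congr (_ * _); apply: eq_bigr => i _.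
by rewrite /excess_loss /target; congr (_ - _); congr (_ ^+ 2); ring.
Qed.

Definition dev_radius (p : R) V pi g : R :=
  20 * p * (bellman_err V pi + fit_err g V pi) + 40 * p ^+ 2.

Definition gap_concentrated n (D : dataset S A n) (p : R) V pi g : Prop :=
  `|sbeed_gap D V pi g - (bellman_err V pi ^+ 2 - fit_err g V pi ^+ 2)|
  <= dev_radius p V pi g.

Section BoundedFunctions.
Variables (M Rmax : R) (V : S -> R) (pi g : S -> A -> R).
Hypothesis gam_01 : 0 <= gam < 1.
Hypothesis Rw_bnd : forall s a, 0 <= Rw s a <= Rmax.
Hypothesis Rmax_le : Rmax <= (1 - gam) * M.
Hypothesis V_bnd : forall s, 0 <= V s <= M.
Hypothesis entropy_bnd : forall s a, `|lam * ln (pi s a)| <= M.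
Hypothesis g_bnd : forall s a, 0 <= g s a <= 2 * M.

Lemma target_bnd x : -M <= target V pi x <= 2 * M.
Proof.
have /ler_normlP [l_lo l_hi] := entropy_bnd x.1.1 x.1.2.
have /andP [V0 V1] := V_bnd x.2; have /andP [r0 r1] := Rw_bnd x.1.1 x.1.2.
have /andP [g0 g1] := gam_01.
have gV0 := mulr_ge0 g0 V0; have gV1 := ler_wpM2l g0 V1.
have := Rmax_le; rewrite mulrBl mul1r => Rmax_le'.
rewrite /target; apply/andP; split; lra.
Qed.

Lemma excess_loss_factor x : exists c,
  excess_loss V pi g x = (V x.1.1 - g x.1.1 x.1.2) * c /\
  (V x.1.1 - g x.1.1 x.1.2) ^+ 2 <= 4 * M ^+ 2 /\ c ^+ 2 <= 25 * M ^+ 2.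
Proof.
exists (V x.1.1 + g x.1.1 x.1.2 - 2 * target V pi x).
split; first by rewrite /excess_loss; ring.
have /andP [y0 y1] := target_bnd x.
have /andP [V0 V1] := V_bnd x.1.1; have /andP [g0 g1] := g_bnd x.1.1 x.1.2.
by split; nra.
Qed.

Lemma excess_loss_norm x : `|excess_loss V pi g x| <= 10 * M ^+ 2.
Proof.
have [c [-> [hd hc]]] := excess_loss_factor x.
move: (V x.1.1 - g x.1.1 x.1.2) hd => d hd.
have := sqr_ge0 (5 * d - 2 * c); have := sqr_ge0 (5 * d + 2 * c).
by rewrite ler_norml; move=> *; apply/andP; split; nra.
Qed.

Lemma excess_loss_mom2 :
  \sum_x transition_weight x * excess_loss V pi g x ^+ 2
  <= 25 * M ^+ 2 * msq (fun s a => V s - g s a).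
Proof.
have marg := transition_weight_marginal (fun s a => 25 * M ^+ 2 * (V s - g s a) ^+ 2).
rewrite /msq mulr_sumr.
under [in X in _ <= X]eq_bigr => s _ do rewrite mulr_sumr.
under [in X in _ <= X]eq_bigr => s _ do under eq_bigr => a _ do rewrite mulrCA.
rewrite -marg; apply: ler_sum => x _; apply: ler_wpM2l; first exact: transition_weight_ge0.
have [c [-> [_ hc]]] := excess_loss_factor x.
by rewrite exprMn mulrC ler_wpM2r ?sqr_ge0.
Qed.

Lemma msq_diff_le : msq (fun s a => V s - g s a) <=
  2 * bellman_err V pi ^+ 2 + 2 * fit_err g V pi ^+ 2.
Proof.
rewrite !norm2mu_sqr /msq !mulr_sumr -big_split /=; apply: ler_sum => s _.
rewrite !mulr_sumr -big_split /=; apply: ler_sum => a _.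
have m0 : 0 <= mu s a by case: mu_distr.
set u := V s; set w := g s a; set z := Cop Rw P gam lam pi V s a.
have : (u - w) ^+ 2 <= 2 * (u - z) ^+ 2 + 2 * (w - z) ^+ 2.
  have := sqr_ge0 (u + w - 2 * z); nra.
nra.
Qed.

Lemma sbeed_gap_deviation n v : 0 < M -> 0 < v -> (0 < n)%N ->
  dprob n transition_weight
    (fun D => ~ gap_concentrated D (Num.sqrt (M ^+ 2 * v)) V pi g)
  <= 2 * expR (- (n%:R * v)).
Proof.
move=> M0 v0 n0.
have radius := bernstein_radius_le M (ltW v0) (bellman_err_ge0 V pi)
  (fit_err_ge0 g V pi) msq_diff_le.
have := bernstein_two_sided transition_weight_ge0 transition_weight_sum1
  (excess_loss_mean V pi g) excess_loss_mom2 excess_loss_norm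
  (mulr_gt0 (ltr0Sn _ 9) (exprn_gt0 2 M0)) v0 n0 radius.
by apply: le_trans; apply: (dprob_mono transition_weight_ge0) => D; rewrite /gap_concentrated sbeed_gapE.
Qed.

Lemma bellman_err_degenerate : M <= 0 -> bellman_err V pi = 0.
Proof.
move=> M0.
have V0 s : V s = 0 by have := V_bnd s; lra.
have /andP [g0 g1] := gam_01.
have residual0 s a : V s - Cop Rw P gam lam pi V s a = 0.
  rewrite /Cop /PV V0 big1 => [|s' _]; last by rewrite V0 mulr0.
  have := entropy_bnd s a; have := Rw_bnd s a.
  move: (lam * ln (pi s a)) => l /andP [r0 r1] hl.
  have -> : l = 0 by apply/eqP; rewrite -normr_le0; lra.
  have Rmax0 : Rmax <= 0 by have := Rmax_le; nra.
  have -> : Rw s a = 0 by apply/eqP; rewrite eq_le r0 andbT; lra.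
  by rewrite mulr0 !(addr0, subr0, oppr0).
rewrite /bellman_err /norm2mu big1 ?sqrtr0 // => s _.
by rewrite big1 // => a _; rewrite residual0 expr0n mulr0.
Qed.

End BoundedFunctions.

Section FiniteClasses.
Variables (IV IP IG : finType).
Variables (fV : IV -> S -> R) (fP : IP -> S -> A -> R) (fG : IG -> S -> A -> R).

Lemma eps_VP_attained : (0 < #|IV|)%N -> (0 < #|IP|)%N ->
  exists iv ip, eps_VP mu Rw P gam lam fV fP = bellman_err (fV iv) (fP ip) ^+ 2.
Proof.
move=> /card_gt0P [iv0 _] /card_gt0P [ip0 _]; rewrite /eps_VP pair_big /=.
have [[iv ip] ->] :=
  bigmin_attained (iv0, ip0) (fun k => bellman_err (fV k.1) (fP k.2) ^+ 2).
by exists iv, ip.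
Qed.

Lemma eps_GVP_upper : (0 < #|IG|)%N -> forall iv ip, exists j,
  fit_err (fG j) (fV iv) (fP ip) ^+ 2 <= eps_GVP mu Rw P gam lam fV fP fG.
Proof.
move=> /card_gt0P [j0 _] iv ip.
pose fit k j := fit_err (fG j) (fV k.1) (fP k.2) ^+ 2.
pose best k := sval (bigmin_attained j0 (fit k)).
have bestE k : \big[Order.min/+oo%E]_j ((fit k j)%:E : \bar R) = (fit k (best k))%:E.
  exact: svalP (bigmin_attained j0 (fit k)).
rewrite /eps_GVP pair_big /=.
rewrite (eq_bigr (fun k => (fit k (best k))%:E)) => [|k _]; last exact: bestE.
have := le_bigmax (-oo%E) (fun k => (fit k (best k))%:E : \bar R) (iv, ip).
have [k ->] := bigmax_attained (iv, ip) (fun k => fit k (best k)).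
by rewrite lee_fin => fit_le; exists (best (iv, ip)).
Qed.

(* Compare its objective with that of the pair
   minimising eps_{V,P}, and evaluate it at the g best fitting the output. *)
Lemma sbeed_oracle n (D : dataset S A n) (p : R) (iv : IV) (ip : IP) :
  (0 < #|IV|)%N -> (0 < #|IP|)%N -> (0 < #|IG|)%N -> 0 <= p ->
  (forall iv ip j, gap_concentrated D p (fV iv) (fP ip) (fG j)) ->
  is_sbeed_output D Rw gam lam fV fP fG iv ip ->
  bellman_err (fV iv) (fP ip) <=
  30 * (Num.sqrt (eps_GVP mu Rw P gam lam fV fP fG)
        + Num.sqrt (eps_VP mu Rw P gam lam fV fP) + p).
Proof.
move=> IV0 IP0 IG0 p0 conc opt.
have [ivS [ipS ->]] := eps_VP_attained IV0 IP0.
have [j fit_le] := eps_GVP_upper IG0 iv ip.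
have gap_lo : bellman_err (fV iv) (fP ip) ^+ 2 - fit_err (fG j) (fV iv) (fP ip) ^+ 2
              - dev_radius p (fV iv) (fP ip) (fG j)
              <= sbeed_gap D (fV iv) (fP ip) (fG j).
  by have := conc iv ip j; rewrite /gap_concentrated ler_norml => /andP [lo _]; lra.
set g := bellman_err (fV ivS) (fP ipS).
have obj_hi : (sbeed_obj D Rw gam lam fG (fV ivS) (fP ipS)
               <= (g ^+ 2 + 20 * p * g + 140 * p ^+ 2)%:E)%E.
  apply: bigmax_le => [|j' _]; first exact: leNye.
  rewrite lee_fin; apply: le_trans (radius_absorb g (fit_err (fG j') (fV ivS) (fP ipS)) p).
  have := conc ivS ipS j'; rewrite /gap_concentrated ler_norml => /andP [_ hi].
  by rewrite /sbeed_gap /dev_radius -/g in hi; lra.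
have gap_hi : sbeed_gap D (fV iv) (fP ip) (fG j) <= g ^+ 2 + 20 * p * g + 140 * p ^+ 2.
  rewrite -lee_fin; apply: le_trans obj_hi; apply: le_trans (opt ivS ipS).
  exact: (le_bigmax (-oo%E) (fun j' => (sbeed_gap D (fV iv) (fP ip) (fG j'))%:E)).
have := oracle_algebra (bellman_err_ge0 _ _) (fit_err_ge0 _ _ _)
  (bellman_err_ge0 _ _) p0 gap_lo gap_hi.
have fit_sqrt : fit_err (fG j) (fV iv) (fP ip) <= Num.sqrt (eps_GVP mu Rw P gam lam fV fP fG).
  by rewrite -(ger0_norm (fit_err_ge0 _ _ _)) -sqrtr_sqr ler_wsqrtr.
by rewrite sqrtr_sqr ger0_norm ?bellman_err_ge0 // /g; lra.
Qed.

Definition conc_scale (M : R) (N : nat) (delta : R) (n : nat) : R :=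
  Num.sqrt (M ^+ 2 * (ln (N%:R / delta) / n%:R)).

Lemma uniform_concentration (M Rmax delta : R) (n : nat) :
  0 <= gam < 1 -> (forall s a, 0 <= Rw s a <= Rmax) -> Rmax <= (1 - gam) * M ->
  (forall iv s, 0 <= fV iv s <= M) ->
  (forall ip s a, `|lam * ln (fP ip s a)| <= M) ->
  (forall j s a, 0 <= fG j s a <= 2 * M) ->
  (0 < #|IV|)%N -> (0 < #|IP|)%N -> (0 < #|IG|)%N ->
  0 < M -> 0 < delta < 1 -> (0 < n)%N ->
  1 - 2 * delta <= dprob n transition_weight (fun D => forall iv ip j,
    gap_concentrated D (conc_scale M (#|IV| * #|IP| * #|IG|) delta n)
      (fV iv) (fP ip) (fG j)).
Proof.
move=> gam01 Rw_bnd Rmax_le fV_bnd fP_bnd fG_bnd IV0 IP0 IG0 M0 /andP [d0 d1] n0.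
set p := conc_scale _ _ _ _.
set N : R := (#|IV| * #|IP| * #|IG|)%:R.
have N1 : 1 <= N by rewrite ler1n !muln_gt0 IV0 IP0 IG0.
have n_gt0 : 0 < n%:R :> R by rewrite ltr0n.
set v := ln (N / delta) / n%:R.
have v0 : 0 < v by rewrite divr_gt0 // ln_gt0 // ltr_pdivlMr // mul1r; lra.
have tail_prob : expR (- (n%:R * v)) = delta / N.
  rewrite /v mulrC divfK ?gt_eqF // expRN lnK ?invf_div // posrE.
  by rewrite divr_gt0 //; lra.
have one_triple (k : IV * IP * IG) : dprob n transition_weight
    (fun D => ~ gap_concentrated D p (fV k.1.1) (fP k.1.2) (fG k.2)) <= 2 * (delta / N).
  by rewrite -tail_prob; apply: (sbeed_gap_deviation gam01 Rw_bnd Rmax_le).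
pose E (k : IV * IP * IG) (D : dataset S A n) :=
  gap_concentrated D p (fV k.1.1) (fP k.1.2) (fG k.2).
have curry : dprob n transition_weight (fun D => forall k, E k D) <=
    dprob n transition_weight (fun D => forall iv ip j,
      gap_concentrated D p (fV iv) (fP ip) (fG j)).
  by apply: (dprob_mono transition_weight_ge0) => D conc iv ip j; exact: (conc (iv, ip, j)).
apply: le_trans curry.
apply: le_trans (dprob_forall transition_weight_ge0 transition_weight_sum1 E).
rewrite lerD2l lerN2; apply: le_trans (ler_sum _ (fun k _ => one_triple k)) _.
rewrite sumr_const !card_prod -/N.
by rewrite -[X in X <= _]mulr_natr -/N -mulrA divfK // gt_eqF //; lra.
Qed.

End FiniteClasses.

End SbeedSetting.

Lemma Rmax_le_Vlmax (R : realType) (A : finType) (Rmax lam gam : R) :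
  0 <= gam < 1 -> 0 < lam -> Rmax <= (1 - gam) * Vlmax A Rmax lam gam.
Proof.
move=> /andP [g0 g1] lam0.
have lnA : 0 <= ln (#|A|%:R : R).
  case: (posnP #|A|) => [->|A0]; first by rewrite ln0.
  by apply: ln_ge0; rewrite ler1n.
rewrite /Vlmax mulrC divfK ?subr_eq0 ?gt_eqF //.
by rewrite lerDl mulr_ge0 // ltW.
Qed.

Lemma entropy_le_Vlmax (R : realType) (M lam x : R) :
  0 < lam -> `|ln x| <= M / lam -> `|lam * ln x| <= M.
Proof.
move=> lam0 hx; rewrite normrM gtr0_norm //.
have lam_neq0 : lam != 0 by rewrite gt_eqF.
by rewrite -(divfK lam_neq0 M) mulrC ler_pM2r.
Qed.

Theorem mainTheorem9 (R : realType) :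
  exists c : R, 0 < c /\
  forall (S A : finType) (gam lam Rmax : R)
    (P : S -> A -> S -> R) (Rw : S -> A -> R) (mu : S -> A -> R)
    (IV IP IG : finType)
    (fV : IV -> S -> R) (fP : IP -> S -> A -> R) (fG : IG -> S -> A -> R)
    (n : nat) (delta : R),
  0 <= gam < 1 -> 0 < lam ->
  is_kernel P ->
  (forall s a, 0 <= Rw s a <= Rmax) ->
  is_distr_SA mu ->
  injective fV -> injective fP -> injective fG ->
  (0 < #|IV|)%N -> (0 < #|IP|)%N -> (0 < #|IG|)%N ->
  (forall iv s, 0 <= fV iv s <= Vlmax A Rmax lam gam) ->
  (forall ip, is_policy (fP ip)) ->
  (forall ip s a, 0 < fP ip s a /\
     `|ln (fP ip s a)| <= Vlmax A Rmax lam gam / lam) ->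
  (forall j s a, 0 <= fG j s a <= 2 * Vlmax A Rmax lam gam) ->
  (0 < n)%N ->
  0 < delta < 1 ->
  let Vm := Vlmax A Rmax lam gam in
  let iota := Vm ^+ 2 * ln ((#|IV| * #|IP| * #|IG|)%:R / delta) in
  let jmath := Vm ^+ 2 * ln ((#|IV| * #|IP|)%:R / delta) in
  let eVP := eps_VP mu Rw P gam lam fV fP in
  let eGVP := eps_GVP mu Rw P gam lam fV fP fG in
  1 - 4 * delta <=
  data_prob mu P (fun D : dataset S A n =>
    forall (iv : IV) (ip : IP),
      is_sbeed_output D Rw gam lam fV fP fG iv ip ->
      norm2mu mu (fun s a => fV iv s - Cop Rw P gam lam (fP ip) (fV iv) s a)
      <= c * (Num.sqrt (jmath / n%:R) + Num.sqrt eVP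
              + Num.sqrt (Num.sqrt (jmath / n%:R * eVP))
              + Num.sqrt eGVP
              + Num.sqrt (Num.sqrt (iota / n%:R * eGVP))
              + Num.sqrt (iota / n%:R))).
Proof.
exists 30; split; first lra.
move=> S A gam lam Rmax P Rw mu IV IP IG fV fP fG n delta gam01 lam0 P_kernel
  Rw_bnd mu_distr _ _ _ IV0 IP0 IG0 fV_bnd _ fP_bnd fG_bnd n0 delta01 /=.
set Vm := Vlmax A Rmax lam gam in fV_bnd fP_bnd fG_bnd *.
have Rmax_le := Rmax_le_Vlmax A Rmax gam01 lam0.
have entropy_bnd ip s a := entropy_le_Vlmax lam0 (proj2 (fP_bnd ip s a)).
rewrite data_probE; set rhs := 30 * _.
have rhs_ge0 : 0 <= rhs by rewrite mulr_ge0 // !addr_ge0 // sqrtr_ge0.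
have [Vm_le0|Vm_gt0] := lerP Vm 0.
  rewrite (dprob_total (transition_weight_sum1 P_kernel mu_distr)); first lra.
  move=> D iv ip _.
  have := bellman_err_degenerate P mu gam01 Rw_bnd Rmax_le (fV_bnd iv) (entropy_bnd ip).
  by rewrite /bellman_err => ->.
have [d0 _] := andP delta01.
apply: (@le_trans _ _ (1 - 2 * delta)); first lra.
apply: le_trans (uniform_concentration P_kernel mu_distr gam01 Rw_bnd Rmax_le
  fV_bnd entropy_bnd fG_bnd IV0 IP0 IG0 Vm_gt0 delta01 n0) _.
apply: (dprob_mono (transition_weight_ge0 P_kernel mu_distr)) => D conc iv ip opt.
apply: le_trans (sbeed_oracle IV0 IP0 IG0 (sqrtr_ge0 _) conc opt) _.
rewrite /conc_scale mulrA ler_pM2l //.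
have := sqrtr_ge0 (Vm ^+ 2 * ln ((#|IV| * #|IP|)%:R / delta) / n%:R).
have := sqrtr_ge0 (Num.sqrt (Vm ^+ 2 * ln ((#|IV| * #|IP|)%:R / delta) / n%:R
                             * eps_VP mu Rw P gam lam fV fP)).
have := sqrtr_ge0 (Num.sqrt (Vm ^+ 2 * ln ((#|IV| * #|IP| * #|IG|)%:R / delta) / n%:R
                             * eps_GVP mu Rw P gam lam fV fP fG)).
lra.
Qed.
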